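(* Let $a\in\mathbb R$, $b\in[a,\infty)$, $u\in[-\infty,\infty)$, $v\in(u,\infty]$, $d,L\in\mathbb N$, $l=(l_0,l_1,\dots,l_L)\in\mathbb N^{L+1}$ satisfy $d\ge\sum_{k=1}^Ll_k(l_{k-1}+1)$. Then for all $\theta,\vartheta\in\mathbb R^d$, $$\sup_{x\in[a,b]^{l_0}}\|\mathscr N^{\theta,l}_{u,v}(x)-\mathscr N^{\vartheta,l}_{u,v}(x)\|_\infty\le L\max\{1,|a|,|b|\}(\|l\|_\infty+1)^L\bigl(\max\{1,\|\theta\|_\infty,\|\vartheta\|_\infty\}\bigr)^{L-1}\|\theta-\vartheta\|_\infty.$$
   Context: $\|\cdot\|_\infty$ is the maximum norm on any $\mathbb R^n$ (also applied to $l$). For $r,s\in\mathbb N$, $k\in\mathbb N_0$, $\theta\in\mathbb R^d$ with $d\ge k+rs+r$, $\mathcal A^{\theta,k}_{r,s}\colon\mathbb R^s\to\mathbb R^r$ has $i$-th component $x\mapsto\sum_{j=1}^s\theta_{k+(i-1)s+j}x_j+\theta_{k+rs+i}$. $\mathfrak C_{u,v,n}$ applies $y\mapsto\max\{u,\min\{y,v\}\}$ componentwise on $\mathbb R^n$ (identity if $u=-\infty$, $v=\infty$) and $\mathfrak R_n$ applies $y\mapsto\max\{y,0\}$ componentwise. With $s_k=\sum_{j=1}^kl_j(l_{j-1}+1)$, $\mathscr N^{\theta,l}_{u,v}=\mathfrak C_{u,v,l_L}\circ\mathcal A^{\theta,s_{L-1}}_{l_L,l_{L-1}}\circ\mathfrak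 R_{l_{L-1}}\circ\cdots\circ\mathfrak R_{l_1}\circ\mathcal A^{\theta,0}_{l_1,l_0}\colon\mathbb R^{l_0}\to\mathbb R^{l_L}$ (for $L=1$ just $\mathfrak C_{u,v,l_1}\circ\mathcal A^{\theta,0}_{l_1,l_0}$). *)

From HB Require Import structures.
From mathcomp Require Import all_boot all_order all_algebra.
From mathcomp Require Import reals constructive_ereal.
Set Implicit Arguments. Unset Strict Implicit. Unset Printing Implicit Defensive.
Import Order.TTheory GRing.Theory Num.Theory.
Local Open Scope ring_scope.

Section DNN.
Variable R : realType.

(* entries of a parameter vector theta in R^d, 0-indexed: theta_(m+1) = pget theta m *)
Definition pget (d : nat) (theta : 'rV[R]_d) (m : nat) : R :=
  match insub m with Some i => theta ord0 i | None => 0 end.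

Definition maxnorm (n : nat) (x : 'rV[R]_n) : R :=
  \big[Num.max/0]_(i < n) `|x ord0 i|.

(* affine map A^{theta,k}_{r,s}; vectors are represented as nat -> R,
   components 0-indexed (component i here = component i+1 in the paper) *)
Definition affine (d : nat) (theta : 'rV[R]_d) (k r s : nat) (x : nat -> R)
  : nat -> R :=
  fun i => \sum_(j < s) pget theta (k + i * s + j) * x j
           + pget theta (k + r * s + i).

Definition relu (x : nat -> R) : nat -> R := fun i => Num.max (x i) 0.

Definition clip (u v : \bar R) (x : nat -> R) : nat -> R :=
  fun i => fine (Order.max u (Order.min (x i)%:E v)).

Definition sdim (l : seq nat) (k : nat) : nat :=
  \sum_(1 <= j < k.+1) nth 0 l j * (nth 0 l j.-1 + 1).

Fixpoint hidden (d : nat) (theta : 'rV[R]_d) (l : seq nat) (n : nat)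
  (x : nat -> R) : nat -> R :=
  match n with
  | 0 => x
  | n'.+1 => relu (affine theta (sdim l n') (nth 0 l n'.+1) (nth 0 l n')
                    (hidden theta l n' x))
  end.

Definition vec_of_row (n : nat) (x : 'rV[R]_n) : nat -> R := pget x.

Definition realization (d : nat) (theta : 'rV[R]_d) (l : seq nat)
  (u v : \bar R) (x : 'rV[R]_(nth 0 l 0)) : nat -> R :=
  let L := (size l).-1 in
  clip u v (affine theta (sdim l L.-1) (nth 0 l L) (nth 0 l L.-1)
             (hidden theta l L.-1 (vec_of_row x))).

End DNN.

Arguments realization {R d} theta l u v x _.
Arguments hidden {R d} theta l n x _.

From HB Require Import structures.
From mathcomp Require Import all_boot all_order all_algebra.
From mathcomp Require Import reals constructive_ereal ring lra.
Set Implicit Arguments. Unset Strict Implicit. Unset Printing Implicit Defensive.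
Import Order.TTheory GRing.Theory Num.Theory.
Local Open Scope ring_scope.

(* Put c = max{1,|a|,|b|}, W = max l, M = max{1,|theta|,|vartheta|} and
   D = |theta - vartheta|.  An affine layer of width at most W whose
   parameters are bounded by M maps inputs bounded by B to outputs bounded by
   M (W B + 1) <= (W + 1) M B, and ReLU and clipping are 1-Lipschitz, so the
   n-th hidden layer is bounded by c ((W + 1) M)^n.  Changing the parameters
   from vartheta to theta moves an affine layer by at most
   D (W B + 1) + M W E, where E is the change of its input; by induction the
   n-th layer moves by at most n c (W + 1)^n M^(n-1) D.
   Entries of theta beyond d read as 0 and [fine] sends +-oo to 0, so the
   estimate holds without the side conditions on d, u, v and the widths. *)

Lemma max_dist_le (R : realDomainType) (c y z : R) :
  `|Num.max c y - Num.max c z| <= `|y - z|.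
Proof.
have := ler_norm (y - z); have := ler_norm (z - y); rewrite distrC ler_norml.
by case: (leP c y); case: (leP c z) => *; apply/andP; split; lra.
Qed.

Lemma min_dist_le (R : realDomainType) (c y z : R) :
  `|Num.min y c - Num.min z c| <= `|y - z|.
Proof.
have := ler_norm (y - z); have := ler_norm (z - y); rewrite distrC ler_norml.
by case: (leP y c); case: (leP z c) => *; apply/andP; split; lra.
Qed.

Lemma norm_le_max_itv (R : realDomainType) (a b y : R) :
  a <= y <= b -> `|y| <= Num.max `|a| `|b|.
Proof.
move=> /andP[ay yb]; have := ler_norm b; have := ler_norm (- a).
rewrite normrN ler_norml; case: (leP `|a| `|b|) => *; apply/andP; split; lra.
Qed.

Section Lipschitz.
Variable R : realType.

Lemma relu_dist_le (F G : nat -> R) i : `|relu F i - relu G i| <= `|F i - G i|.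
Proof. by rewrite /relu ![Num.max _ 0]maxC max_dist_le. Qed.

Lemma relu_norm_le (F : nat -> R) i : `|relu F i| <= `|F i|.
Proof. by have := relu_dist_le F (fun=> 0) i; rewrite /relu maxxx !subr0. Qed.

Lemma clip_dist_le (u v : \bar R) (F G : nat -> R) i :
  `|clip u v F i - clip u v G i| <= `|F i - G i|.
Proof.
rewrite /clip; move: (F i) (G i) => y z.
case: u => [u| |]; case: v => [v| |];
  rewrite ?maxye ?mineNy ?miney ?maxNye ?maxeNy -?EFin_min -?EFin_max /=;
  by [rewrite subrr normr0 | exact: lexx | exact: max_dist_le
     | exact: min_dist_le | exact: le_trans (max_dist_le _ _ _) (min_dist_le _ _ _)].
Qed.

End Lipschitz.

Section Pget.
Variable R : realType.

Lemma maxnorm_ge0 n (x : 'rV[R]_n) : 0 <= maxnorm x.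
Proof. exact: bigmax_ge_id. Qed.

Lemma norm_pget_le n (x : 'rV[R]_n) m : `|pget x m| <= maxnorm x.
Proof.
rewrite /pget; case: insubP => [i _ _|_]; first exact: le_bigmax.
by rewrite normr0 maxnorm_ge0.
Qed.

Lemma pgetB n (x y : 'rV[R]_n) m : pget (x - y) m = pget x m - pget y m.
Proof. by rewrite /pget; case: insubP => [i _ _|_]; rewrite ?mxE ?subr0. Qed.

End Pget.

Section Affine.
Variables (R : realType) (d : nat).
Implicit Types (theta vartheta : 'rV[R]_d) (x y : nat -> R).

Lemma norm_sum_mul_le s (p q : 'I_s -> R) (P Q : R) :
  (forall j, `|p j| <= P) -> (forall j, `|q j| <= Q) ->
  `|\sum_(j < s) p j * q j| <= s%:R * (P * Q).
Proof.
move=> hp hq; apply: le_trans (ler_norm_sum _ _ _) _.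
have -> : s%:R * (P * Q) = \sum_(j < s) P * Q.
  by rewrite sumr_const card_ord mulr_natl.
by apply: ler_sum => j _; rewrite normrM ler_pM.
Qed.

Lemma affine_norm_le theta k r s x (M B : R) i :
  (forall m, `|pget theta m| <= M) -> (forall j, `|x j| <= B) ->
  `|affine theta k r s x i| <= M * (s%:R * B + 1).
Proof.
move=> htheta hx; rewrite /affine mulrDr mulr1 mulrCA.
apply: le_trans (ler_normD _ _) (lerD _ (htheta _)).
by apply: norm_sum_mul_le => j.
Qed.

Lemma affineB theta vartheta k r s x y i :
  affine theta k r s x i - affine vartheta k r s y i =
  affine (theta - vartheta) k r s x i
  + \sum_(j < s) pget vartheta (k + i * s + j) * (x j - y j).
Proof.
have sums : \sum_(j < s) pget (theta - vartheta) (k + i * s + j) * x j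
    + \sum_(j < s) pget vartheta (k + i * s + j) * (x j - y j)
  = \sum_(j < s) pget theta (k + i * s + j) * x j
    - \sum_(j < s) pget vartheta (k + i * s + j) * y j.
  by rewrite -big_split /= -sumrB; apply: eq_bigr => j _; rewrite pgetB; ring.
by rewrite /affine [RHS]addrAC sums pgetB; ring.
Qed.

Lemma affine_dist_le theta vartheta k r s x y (M D B E : R) i :
  (forall m, `|pget vartheta m| <= M) ->
  (forall m, `|pget theta m - pget vartheta m| <= D) ->
  (forall j, `|x j| <= B) -> (forall j, `|x j - y j| <= E) ->
  `|affine theta k r s x i - affine vartheta k r s y i|
    <= D * (s%:R * B + 1) + s%:R * (M * E).
Proof.
move=> hvartheta hD hx hxy; rewrite affineB.
apply: le_trans (ler_normD _ _) (lerD _ _); last by apply: norm_sum_mul_le => j.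
by apply: (affine_norm_le _ _ _ _ _ hx) => m; rewrite pgetB.
Qed.

End Affine.

Section Network.
Variables (R : realType) (d : nat) (theta vartheta : 'rV[R]_d).
Variables (l : seq nat) (w : nat) (x : nat -> R) (c M D : R).
Hypotheses (hw : forall n, (nth 0 l n <= w)%N).
Hypotheses (c1 : 1 <= c) (hx : forall j, `|x j| <= c).
Hypotheses (M1 : 1 <= M) (htheta : forall m, `|pget theta m| <= M).
Hypotheses (hvartheta : forall m, `|pget vartheta m| <= M).
Hypotheses (hD : forall m, `|pget theta m - pget vartheta m| <= D).

Lemma width_mulD1_le n (B : R) :
  1 <= B -> (nth 0 l n)%:R * B + 1 <= (w%:R + 1) * B.
Proof.
have : (nth 0 l n)%:R + 1 <= w%:R + 1 :> R by rewrite lerD2r ler_nat.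
by move=> *; nra.
Qed.

Lemma hidden_bound_ge1 n : 1 <= c * (w%:R + 1) ^+ n * M ^+ n.
Proof. by rewrite !mulr_ege1 // exprn_ege1 // lerDr. Qed.

Lemma hidden_norm_le n j :
  `|hidden theta l n x j| <= c * (w%:R + 1) ^+ n * M ^+ n.
Proof.
elim: n j => [|n IH] j /=; first by rewrite !expr0 !mulr1.
apply: le_trans (relu_norm_le _ _) _.
apply: le_trans (affine_norm_le _ _ _ _ htheta IH) _.
have -> : c * (w%:R + 1) ^+ n.+1 * M ^+ n.+1
    = M * ((w%:R + 1) * (c * (w%:R + 1) ^+ n * M ^+ n)) by rewrite !exprS; ring.
rewrite ler_wpM2l ?(le_trans ler01) //.
exact: width_mulD1_le (hidden_bound_ge1 n).
Qed.

Lemma layer_dist_le n k r i :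
  (forall j, `|hidden theta l n x j - hidden vartheta l n x j|
     <= n%:R * c * (w%:R + 1) ^+ n * M ^+ n.-1 * D) ->
  `|affine theta k r (nth 0 l n) (hidden theta l n x) i
    - affine vartheta k r (nth 0 l n) (hidden vartheta l n x) i|
  <= n.+1%:R * c * (w%:R + 1) ^+ n.+1 * M ^+ n * D.
Proof.
move=> hprev.
apply: le_trans (affine_dist_le _ _ _ _ hvartheta hD (hidden_norm_le n) hprev) _.
have D0 : 0 <= D := le_trans (normr_ge0 _) (hD 0).
have B1 := hidden_bound_ge1 n.
have M_prev : M * (n%:R * c * (w%:R + 1) ^+ n * M ^+ n.-1 * D)
    = n%:R * (c * (w%:R + 1) ^+ n * M ^+ n) * D.
  case: n {hprev B1} => [|n]; first by rewrite !mul0r mulr0.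
  by rewrite [M ^+ n.+1]exprS /=; ring.
rewrite M_prev; set B := c * (w%:R + 1) ^+ n * M ^+ n.
have -> : n.+1%:R * c * (w%:R + 1) ^+ n.+1 * M ^+ n * D
    = D * ((w%:R + 1) * B) + (w%:R + 1) * (n%:R * B * D).
  by rewrite /B exprS -natr1; ring.
have nBD0 : 0 <= n%:R * B * D.
  by apply: mulr_ge0 => //; apply: mulr_ge0 => //; apply: le_trans B1.
rewrite lerD ?ler_wpM2l ?width_mulD1_le // ler_wpM2r //.
by rewrite natr1 ler_nat leqW.
Qed.

Lemma hidden_dist_le n j :
  `|hidden theta l n x j - hidden vartheta l n x j|
    <= n%:R * c * (w%:R + 1) ^+ n * M ^+ n.-1 * D.
Proof.
elim: n j => [|n IH] j /=; first by rewrite subrr normr0 !mul0r.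
exact: le_trans (relu_dist_le _ _ _) (layer_dist_le _ _ _ IH).
Qed.

End Network.

Theorem corollary2p37 (R : realType) (a b : R) (u v : \bar R) (d L : nat)
  (l : seq nat)
  (hab : a <= b) (hu : u != +oo%E) (huv : (u < v)%E)
  (hd : (0 < d)%N) (hL : (0 < L)%N)
  (hsize : size l = L.+1) (hl : all (fun k => 0 < k)%N l)
  (hdim : (sdim l L <= d)%N)
  (theta vartheta : 'rV[R]_d) :
  forall x : 'rV[R]_(nth 0%N l 0),
    (forall i, a <= x ord0 i <= b) ->
    \big[Num.max/0]_(i < nth 0%N l L)
       `|realization theta l u v x i - realization vartheta l u v x i|
    <= L%:R * Num.max 1 (Num.max `|a| `|b|)
       * ((\max_(k <- l) k)%N%:R + 1) ^+ L
       * (Num.max 1 (Num.max (maxnorm theta) (maxnorm vartheta))) ^+ L.-1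
       * maxnorm (theta - vartheta).
Proof.
move=> x hx.
set c := Num.max 1 (Num.max `|a| `|b|).
set M := Num.max 1 (Num.max (maxnorm theta) (maxnorm vartheta)).
have c1 : 1 <= c by rewrite le_max lexx.
have M1 : 1 <= M by rewrite le_max lexx.
have hw n : (nth 0 l n <= \max_(k <- l) k)%N.
  case: (ltnP n (size l)) => hn; last by rewrite nth_default.
  exact: leq_bigmax_seq (mem_nth 0 hn) _.
have hx0 j : `|vec_of_row x j| <= c.
  rewrite /vec_of_row /pget; case: insubP => [i _ _|_].
    by rewrite le_max norm_le_max_itv ?orbT.
  by rewrite normr0 (le_trans ler01 c1).
have htheta m : `|pget theta m| <= M.
  by rewrite le_max le_max norm_pget_le !orbT.
have hvartheta m : `|pget vartheta m| <= M.
  by rewrite le_max le_max norm_pget_le !orbT.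
have hD m : `|pget theta m - pget vartheta m| <= maxnorm (theta - vartheta).
  by rewrite -pgetB norm_pget_le.
have dist_le := hidden_dist_le hw c1 hx0 M1 htheta hvartheta hD.
apply: bigmax_le => [|i _]; first exact: le_trans (normr_ge0 _) (dist_le L 0).
rewrite /realization hsize /=; apply: le_trans (clip_dist_le _ _ _ _ _) _.
have := layer_dist_le hw c1 hx0 M1 htheta hvartheta hD (sdim l L.-1) (nth 0 l L) i
  (dist_le L.-1).
by rewrite prednK.
Qed.
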